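(* For every nonnegative integer $n$, $$\sum_{k=0}^{\infty}(-1)^k(4k+1)\,\frac{(-2n)_k\,(-n+\tfrac14)_k\,(\tfrac12)_k}{k!\,(n+\tfrac54)_k\,(2n+\tfrac32)_k}=\left(\frac{2^2}{3^3}\right)^n\frac{(\tfrac54)_n^2}{(\tfrac{13}{12})_n(\tfrac{5}{12})_n}.$$ (The sum is finite, since $(-2n)_k=0$ for $k>2n$.)
   Context: $(a)_j=\Gamma(a+j)/\Gamma(a)=a(a+1)\cdots(a+j-1)$ denotes the rising factorial (Pochhammer symbol), with $(a)_0=1$. *)

From HB Require Import structures.
From mathcomp Require Import all_boot all_order all_algebra.
Set Implicit Arguments. Unset Strict Implicit. Unset Printing Implicit Defensive.
Import Order.TTheory GRing.Theory Num.Theory.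
Local Open Scope ring_scope.

Definition poch (R : nzRingType) (a : R) (j : nat) : R :=
  \prod_(i < j) (a + i%:R).

(* A terminating 4F3-type summation, proved by the Wilf-Zeilberger method.

   Write t(N,k) = (4k+1) F(N,k) for the summand, where F(N,k) is the
   hypergeometric term (-1)^k (-2N)_k (-N+1/4)_k (1/2)_k / (k! (N+5/4)_k (2N+3/2)_k),
   and r(N) = (4/27) (N+5/4)^2 / ((N+13/12)(N+5/12)) for the ratio of consecutive
   right-hand sides.  The heart of the proof is an explicit WZ mate
   G(N,k) = C(N,k) F(N+1,k), with C rational, satisfying for real N >= 0
       t(N+1,k) - r(N) t(N,k) = G(N,k+1) - G(N,k).
   It is checked as a rational-function identity after expressing F(N,k+1) and
   F(N,k) through F(N+1,k) (term ratios in k and in N).  For N = n a natural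
   number the sums terminate: F(n,k) = 0 for k > 2n because (-2n)_k = 0, and
   G(n,0) = G(n,2n+3) = 0, so summing over k telescopes to the recurrence
   S(n+1) = r(n) S(n).  The right-hand side obeys the same recurrence and both
   sides equal 1 at n = 0.  Everything is developed over an arbitrary real
   field and specialised to the rationals at the end. *)
From HB Require Import structures.
From mathcomp Require Import all_boot all_order all_algebra.
From mathcomp Require Import ring lra.
Set Implicit Arguments. Unset Strict Implicit. Unset Printing Implicit Defensive.
Import Order.TTheory GRing.Theory Num.Theory.
Local Open Scope ring_scope.

Section Pochhammer.
Variable R : nzRingType.

Lemma poch0 (a : R) : poch a 0 = 1.
Proof. by rewrite /poch big_ord0. Qed.

Lemma pochS (a : R) k : poch a k.+1 = poch a k * (a + k%:R).
Proof. by rewrite /poch big_ord_recr. Qed.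

Lemma poch_negnat (m k : nat) : (m < k)%N -> poch (- m%:R : R) k = 0.
Proof.
elim: k => // k IHk; rewrite ltnS leq_eqVlt => /orP[/eqP-> | lt_mk].
  by rewrite pochS addNr mulr0.
by rewrite pochS IHk ?mul0r.
Qed.

End Pochhammer.

Lemma poch_gt0 (R : numDomainType) (a : R) k : 0 < a -> 0 < poch a k.
Proof. by move=> a_gt0; apply: prodr_gt0 => i _; rewrite ltr_wpDr. Qed.

(* A sum over 0 <= k < m may be extended to k < p when the summand vanishes
   from m on; needed to compare the sums at n and n+1 over a common range. *)
Lemma sum_vanishing_tail (V : nmodType) (f : nat -> V) m p :
  (m <= p)%N -> (forall j, (m <= j)%N -> f j = 0) ->
  \sum_(k < m) f k = \sum_(k < p) f k.
Proof.
move=> le_mp f_tail; rewrite -!(big_mkord xpredT) (big_cat_nat (leq0n m) le_mp) /=.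
rewrite [X in _ = _ + X]big1_seq ?addr0 // => j /andP[_].
by rewrite mem_index_iota => /andP[/f_tail].
Qed.

Section WZPair.
Variable R : realFieldType.

Definition hterm (N : R) (k : nat) : R :=
  (-1) ^+ k * (poch (- (2 * N)) k * poch (- N + 1 / 4) k * poch (1 / 2) k)
     / ((k`!)%:R * poch (N + 5 / 4) k * poch (2 * N + 3 / 2) k).

Lemma hterm0 N : hterm N 0 = 1.
Proof. by rewrite /hterm !poch0 expr0 fact0 !mulr1 invr1 mulr1. Qed.

Lemma htermS (N : R) k : 0 <= N ->
  hterm N k.+1 = hterm N k * (- ((k%:R - 2 * N) * (k%:R - N + 1/4) * (k%:R + 1/2)))
     / ((k%:R + 1) * (k%:R + N + 5/4) * (k%:R + 2 * N + 3/2)).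
Proof.
move=> N_ge0; rewrite /hterm !pochS factS natrM exprS mulrSr.
have k_ge0 : 0 <= k%:R :> R by [].
have p1 : poch (N + 5/4) k != 0 by rewrite gt_eqF // poch_gt0 //; lra.
have p2 : poch (2 * N + 3/2) k != 0 by rewrite gt_eqF // poch_gt0 //; lra.
have f : (k`!)%:R != 0 :> R by rewrite pnatr_eq0 -lt0n fact_gt0.
by field; lra.
Qed.

(* Term ratio in N: F(N,k) = F(N+1,k) * shiftN N k. *)
Definition shiftN (N K : R) : R :=
  - ((K - 2*N - 2) * (K - 2*N - 1) * (K - N - 3/4) *
     (N + K + 5/4) * (2*N + K + 5/2) * (2*N + K + 3/2))
  / ((2*N + 2) * (2*N + 1) * (N + 3/4) * (N + 5/4) * (2*N + 3/2) * (2*N + 5/2)).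

Lemma hterm_shiftN (N : R) k : 0 <= N -> hterm N k = hterm (N + 1) k * shiftN N k%:R.
Proof.
move=> N_ge0; elim: k => [|k IHk].
  by rewrite !hterm0 mul1r /shiftN; field; lra.
have N1_ge0 : 0 <= N + 1 by lra.
have k_ge0 : 0 <= k%:R :> R by [].
rewrite htermS // (htermS _ N1_ge0) IHk mulrSr /shiftN.
by field; lra.
Qed.

Definition summand (N : R) (k : nat) : R := (4 * k%:R + 1) * hterm N k.

Definition ratio (N : R) : R :=
  4/27 * (N + 5/4) ^+ 2 / ((N + 13/12) * (N + 5/12)).

(* The rational WZ certificate C(N,K); its factor K makes G(N,0) vanish. *)
Definition certificate (N K : R) : R :=
  K * (K + N + 5/4) * (K + 2*N + 5/2) *
  ((- (137/864) - 383/432*N - 14/9*N^+2 - 23/27*N^+3) * (N + 3/4)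
     + (- (71/1728) - N/8 - 11/108*N^+2) * K + (67/864 + N/4 + 11/54*N^+2) * K^+2
     + (K^+3 - K^+4) / 54)
  / ((N + 5/12) * (N + 1/2) * (N + 3/4) ^+ 2 * (N + 1) * (N + 13/12)).

Definition wz_mate (N : R) (k : nat) : R := certificate N k%:R * hterm (N + 1) k.

Lemma wz_step (N : R) k : 0 <= N ->
  summand (N + 1) k - ratio N * summand N k = wz_mate N k.+1 - wz_mate N k.
Proof.
move=> N_ge0; have N1_ge0 : 0 <= N + 1 by lra.
have k_ge0 : 0 <= k%:R :> R by [].
rewrite /summand /wz_mate (htermS _ N1_ge0) (hterm_shiftN _ N_ge0) mulrSr.
rewrite /ratio /certificate /shiftN.
by field; lra.
Qed.

End WZPair.

Section TerminatingSum.
Variable R : realFieldType.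

Definition lhs (n : nat) : R := \sum_(k < (2 * n).+1) summand n%:R k.

Definition rhs (n : nat) : R :=
  (4 / 27) ^+ n * poch (5 / 4) n ^+ 2 / (poch (13 / 12) n * poch (5 / 12) n).

Lemma hterm_vanish (n k : nat) : (2 * n < k)%N -> hterm (n%:R : R) k = 0.
Proof. by move=> lt_2n_k; rewrite /hterm -natrM poch_negnat // !(mul0r, mulr0). Qed.

Lemma wz_mate0 (N : R) : wz_mate N 0 = 0.
Proof. by rewrite /wz_mate /certificate !mul0r. Qed.

Lemma wz_mate_vanish (n : nat) : wz_mate (n%:R : R) (2 * n).+3 = 0.
Proof. by rewrite /wz_mate -mulrSr hterm_vanish ?mulr0 // mulnS. Qed.

(* Telescoping the WZ equation over k < 2n+3 gives the recurrence for the sum. *)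
Lemma lhsS n : lhs n.+1 = ratio n%:R * lhs n.
Proof.
have tail_zero j : (2 * n < j)%N -> summand (n%:R : R) j = 0.
  by move=> lt_2n_j; rewrite /summand hterm_vanish ?mulr0.
rewrite /lhs (sum_vanishing_tail (leqW (leqnSn (2 * n).+1)) tail_zero) mulnS mulr_sumr.
apply/eqP; rewrite -subr_eq0 -sumrB /=.
under eq_bigr => k _ do rewrite mulrSr wz_step //.
by rewrite -(big_mkord xpredT (fun k => wz_mate _ k.+1 - wz_mate _ k)) telescope_sumr
  // wz_mate_vanish wz_mate0 subrr.
Qed.

Lemma rhsS n : rhs n.+1 = ratio n%:R * rhs n.
Proof.
have n_ge0 : 0 <= n%:R :> R by [].
have p1 : poch (13/12 : R) n != 0 by rewrite gt_eqF // poch_gt0 //; lra.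
have p2 : poch (5/12 : R) n != 0 by rewrite gt_eqF // poch_gt0 //; lra.
rewrite /rhs /ratio !pochS exprS.
by field; lra.
Qed.

Lemma lhs_eq_rhs n : lhs n = rhs n.
Proof.
elim: n => [|n IHn]; last by rewrite lhsS rhsS IHn.
by rewrite /lhs /rhs big_ord1 /summand hterm0 !poch0 /=; field.
Qed.

End TerminatingSum.

(* The summand of the statement is t(n,k) with 2n written as (2n)%:R. *)
Theorem theorem3 (n : nat) :
  \sum_(k < (2 * n).+1)
     (-1) ^+ k * (4 * k%:R + 1) *
     (poch (- (2 * n)%:R : rat) k * poch (- n%:R + 1 / 4) k * poch (1 / 2) k)
     / ((k`!)%:R * poch (n%:R + 5 / 4) k * poch ((2 * n)%:R + 3 / 2) k)
  = (4 / 27) ^+ n * (poch (5 / 4 : rat) n) ^+ 2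
     / (poch (13 / 12) n * poch (5 / 12) n).
Proof.
rewrite -[RHS]/(rhs rat n) -lhs_eq_rhs; apply: eq_bigr => k _.
by rewrite /summand /hterm natrM [_ * (4 * _ + 1)]mulrC -!mulrA.
Qed.
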